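(* Every smooth irreducible genuine $k$-representation of $\widetilde T$ is finite-dimensional.
   Context: Let $p$ be an odd prime and $k$ an algebraically closed field of characteristic $p$. Let $G=\mathrm{GL}_2(\mathbb{Q}_p)$, $v$ the $p$-adic valuation, $\mu_2=\{\pm1\}$, $\omega\colon\mathbb{Q}_p^\times\to\mathbb{F}_p^\times$, $x\mapsto (xp^{-v(x)}\bmod p)$, Hilbert symbol $(a,b)=\omega\big((-1)^{v(a)v(b)}b^{v(a)}/a^{v(b)}\big)^{(p-1)/2}$. For $g=\begin{pmatrix}a&b\\c&d\end{pmatrix}$ put $\mathfrak c(g)=c$ if $c\neq0$, $\mathfrak c(g)=d$ if $c=0$. The metaplectic cover $\widetilde G$ is $G\times\mu_2$ with $(g_1,\zeta_1)(g_2,\zeta_2)=(g_1g_2,\zeta_1\zeta_2\sigma(g_1,g_2))$, $\sigma(g_1,g_2)=\big(\mathfrak c(g_1g_2)/\mathfrak c(g_1),\ \det(g_1)\mathfrak c(g_1g_2)/\mathfrak c(g_2)\big)$. $T$ is the diagonal torus and $\widetilde T$ its preimage in $\widetilde G$. $\iota\colon\mu_2\to k^\times$ is the nontrivial character; genuine means $\mu_2$ acts through $\iota$. *)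

From HB Require Import structures.
From mathcomp Require Import all_boot all_order all_algebra.
Set Implicit Arguments. Unset Strict Implicit. Unset Printing Implicit Defensive.
Import Order.TTheory GRing.Theory Num.Theory.

(** * Z_p^x as the inverse limit of (Z/p^(n+1))^x.
    An element is the sequence of its residues  zf n  in [0, p^(n+1)),
    compatible under reduction, with unit residue mod p. *)
Record Zpx (p : nat) := MkZpx {
  zf : nat -> nat;
  zf_norm : forall n, zf n %% p ^ n.+1 = zf n;
  zf_compat : forall n, zf n.+1 %% p ^ n.+1 = zf n;
  zf_unit : coprime (zf 0) p }.

Section ZpxOps.
Variable p : nat.

Lemma Zpx_mul_norm (x y : Zpx p) n :
  (zf x n * zf y n %% p ^ n.+1) %% p ^ n.+1 = zf x n * zf y n %% p ^ n.+1.
Proof. by rewrite modn_mod. Qed.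

Lemma Zpx_mul_compat (x y : Zpx p) n :
  (zf x n.+1 * zf y n.+1 %% p ^ n.+2) %% p ^ n.+1 = zf x n * zf y n %% p ^ n.+1.
Proof.
rewrite modn_dvdm; last by rewrite dvdn_exp2l.
by rewrite -modnMm !zf_compat.
Qed.

Lemma Zpx_mul_unit (x y : Zpx p) : coprime (zf x 0 * zf y 0 %% p ^ 1) p.
Proof. by rewrite expn1 coprime_modl coprimeMl !zf_unit. Qed.

Definition Zpx_mul (x y : Zpx p) : Zpx p :=
  MkZpx (Zpx_mul_norm x y) (Zpx_mul_compat x y) (Zpx_mul_unit x y).

Lemma Zpx_one_norm n : (1 %% p ^ n.+1) %% p ^ n.+1 = 1 %% p ^ n.+1.
Proof. by rewrite modn_mod. Qed.

Lemma Zpx_one_compat n : (1 %% p ^ n.+2) %% p ^ n.+1 = 1 %% p ^ n.+1.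
Proof. by rewrite modn_dvdm // dvdn_exp2l. Qed.

Lemma Zpx_one_unit : coprime (1 %% p ^ 1) p.
Proof. by rewrite expn1 coprime_modl coprime1n. Qed.

Definition Zpx_one : Zpx p :=
  MkZpx (fun n => Zpx_one_norm n) (fun n => Zpx_one_compat n) Zpx_one_unit.

(** * Q_p^x = p^Z x Z_p^x : the pair (n, u) stands for p^n u. *)
Definition Qpx := (int * Zpx p)%type.

Definition Qpx_mul (x y : Qpx) : Qpx := (x.1 + y.1, Zpx_mul x.2 y.2)%R.
Definition Qpx_one : Qpx := (0%R, Zpx_one).

Definition vp (x : Qpx) : int := x.1.

(** omega(x) = x p^{-v(x)} mod p, in F_p^x *)
Local Open Scope ring_scope.
Definition omega (x : Qpx) : 'F_p := (zf x.2 0)%:R.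

Definition hilbert_F (a b : Qpx) : 'F_p :=
  ((-1) ^ (vp a * vp b) * omega b ^ (vp a) / omega a ^ (vp b)) ^+ ((p - 1) %/ 2)%N.

(** mu_2 = {+1,-1} encoded as bool, with true = -1 and product = xor. *)
Definition hilbert (a b : Qpx) : bool := hilbert_F a b == -1.

(** Diagonal torus T: (a, d) stands for diag(a, d). *)
Definition T := (Qpx * Qpx)%type.
Definition T_mul (s t : T) : T := (Qpx_mul s.1 t.1, Qpx_mul s.2 t.2).

(** Cocycle restricted to T: for g1 = diag(a1,d1), g2 = diag(a2,d2) we have
    c(g1) = d1, c(g2) = d2, c(g1 g2) = d1 d2, det g1 = a1 d1, hence
    sigma(g1,g2) = ( d1 d2 / d1 , a1 d1 * d1 d2 / d2 ) = ( d2 , a1 d1 d1 ). *)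
Definition sigmaT (s t : T) : bool :=
  hilbert t.2 (Qpx_mul (Qpx_mul s.1 s.2) s.2).

Definition Ttilde := (T * bool)%type.
Definition Tt_mul (x y : Ttilde) : Ttilde :=
  (T_mul x.1 y.1, xorb (xorb x.2 y.2) (sigmaT x.1 y.1)).
Definition Tt_one : Ttilde := ((Qpx_one, Qpx_one), false).
Definition Tt_mone : Ttilde := ((Qpx_one, Qpx_one), true).

(** x lies in 1 + p^(m+1) Z_p *)
Definition in_K (m : nat) (x : Qpx) : bool :=
  (vp x == 0) && (zf x.2 m == (1 %% p ^ m.+1)%N).

End ZpxOps.

Section Reps.
Local Open Scope ring_scope.
Variables (p : nat) (k : fieldType) (V : lmodType k).
Variable pi : Ttilde p -> {linear V -> V}.

Definition is_rep : Prop :=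
  (forall v, pi (Tt_one p) v = v) /\
  (forall g h v, pi (Tt_mul g h) v = pi g (pi h v)).

Definition genuine : Prop := forall v, pi (Tt_mone p) v = - v.

(** smooth: every vector is fixed by an open subgroup of T~; the subgroups
    (1 + p^(m+1) Z_p)^2 x {1} form a neighbourhood basis of 1 in T~. *)
Definition smooth : Prop :=
  forall v : V, exists m : nat, forall t : T p,
    in_K m t.1 -> in_K m t.2 -> pi (t, false) v = v.

Definition invariant_subspace (S : V -> Prop) : Prop :=
  [/\ S 0, (forall u w, S u -> S w -> S (u + w)),
      (forall (a : k) u, S u -> S (a *: u)) &
      (forall g u, S u -> S (pi g u))].

Definition irreducible : Prop :=
  (exists v : V, v != 0) /\
  forall S, invariant_subspace S -> (forall v, S v) \/ (forall v, S v -> v = 0).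

End Reps.

Definition finite_dim (k : fieldType) (V : lmodType k) : Prop :=
  exists (n : nat) (b : 'I_n -> V), forall v : V,
    exists c : 'I_n -> k, v = (\sum_(i < n) c i *: b i)%R.

(* Let X = diag(p^2, 1) and Y = diag(1, p^2).  Squares lie in the radical of
   the Hilbert symbol, so X and Y are central in T~ and act on V by commuting
   automorphisms that commute with T~.  If v0 <> 0 is fixed by K_m, every element
   of T~ is, up to sign and up to K_m, X^a Y^b times one of finitely many coset
   representatives; by irreducibility V is generated over k[X, 1/X, Y, 1/Y] by
   finitely many vectors w_i.  By Schur's lemma every polynomial in X and Y acts
   by zero or invertibly.  If X were transcendental, V would be finitely
   generated over k[X][1/g] (if Y is algebraic over k(X)) or over k[X, Y][1/g]
   (if not) while being a vector space over the fraction field; as neither ring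
   is a Goldman domain this forces V = 0.  Hence X, and symmetrically Y, is
   annihilated by a nonzero polynomial, so is a scalar as k is algebraically
   closed, and V is spanned by the w_i. *)

From Stdlib Require Import Classical ProofIrrelevance FunctionalExtensionality.
From HB Require Import structures.
From mathcomp Require Import all_boot all_order all_algebra finfield cyclic ring.

Set Implicit Arguments. Unset Strict Implicit. Unset Printing Implicit Defensive.
Import GRing.Theory.
Local Open Scope ring_scope.

Section RingActions.
Variables (k : fieldType) (V : lmodType k).

Definition mklinear (f : V -> V) (f_lin : linear f) : {linear V -> V} :=
  HB.pack f (GRing.isLinear.Build k V V *:%R f f_lin).

Section BareLinear.
Variables (f : V -> V) (f_lin : linear f).

Lemma lin0 : f 0 = 0. Proof. exact: linear0 (mklinear f_lin). Qed.
Lemma linD : {morph f : u v / u + v}. Proof. exact: linearD (mklinear f_lin). Qed.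
Lemma linN : {morph f : u / - u}. Proof. exact: linearN (mklinear f_lin). Qed.
Lemma linZ (c : k) : {morph f : u / c *: u}.
Proof. by move=> u; rewrite -[c *: u]addr0 f_lin lin0 addr0. Qed.
Lemma lin_sum (I : Type) (r : seq I) (P : pred I) (F : I -> V) :
  f (\sum_(i <- r | P i) F i) = \sum_(i <- r | P i) f (F i).
Proof. exact: (linear_sum (mklinear f_lin) r P F). Qed.

Lemma linear_iter n : linear (iter n f).
Proof. by elim: n => [|n IHn] a u v //=; rewrite IHn linD linZ. Qed.

End BareLinear.

Definition invertible (f : V -> V) :=
  (forall u, f u = 0 -> u = 0) /\ (forall u, exists v, f v = u).

Record ring_action (R : nzRingType) (A : R -> V -> V) : Prop := RingAction {
  act_linear : forall r, linear (A r);
  actD : forall r s v, A (r + s) v = A r v + A s v;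
  actM : forall r s v, A (r * s) v = A r (A s v);
  act1 : forall v, A 1 v = v }.

Section ActionTheory.
Variables (R : nzRingType) (A : R -> V -> V) (hA : ring_action A).

Lemma act0 v : A 0 v = 0.
Proof. by apply: (addrI (A 0 v)); rewrite -actD // !addr0. Qed.

Lemma actN r v : A (- r) v = - A r v.
Proof. by apply/eqP; rewrite -addr_eq0 -actD // addNr act0. Qed.

Lemma actB r s v : A (r - s) v = A r v - A s v.
Proof. by rewrite actD // actN. Qed.

Lemma actvD r : {morph A r : u v / u + v}. Proof. exact: linD (act_linear hA r). Qed.
Lemma actvN r : {morph A r : u / - u}. Proof. exact: linN (act_linear hA r). Qed.
Lemma actv_sum r (I : Type) (l : seq I) (P : pred I) (F : I -> V) :
  A r (\sum_(i <- l | P i) F i) = \sum_(i <- l | P i) A r (F i).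
Proof. exact: (lin_sum (act_linear hA r) l P F). Qed.

End ActionTheory.

Lemma actC (R : comNzRingType) (A : R -> V -> V) : ring_action A ->
  forall r s v, A r (A s v) = A s (A r v).
Proof. by move=> hA r s v; rewrite -!actM // mulrC. Qed.

Lemma scale_action : ring_action ( *:%R : k -> V -> V).
Proof.
split=> [c a u v|r s v|r s v|v]; rewrite ?scalerDl ?scalerA ?scale1r //.
by rewrite scalerDr !scalerA mulrC.
Qed.

Section PolyAction.
Variables (R : nzRingType) (A : R -> V -> V) (hA : ring_action A).
Variables (T : V -> V) (T_lin : linear T).
Hypothesis TA : forall r v, T (A r v) = A r (T v).

Definition poly_action (q : {poly R}) v := \sum_(j < size q) iter j T (A q`_j v).

Lemma iterT_act j r v : iter j T (A r v) = A r (iter j T v).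
Proof. by elim: j => //= j ->; rewrite TA. Qed.

Lemma poly_action_bound (q : {poly R}) n v : (size q <= n)%N ->
  poly_action q v = \sum_(j < n) iter j T (A q`_j v).
Proof.
move=> le_qn; rewrite /poly_action -!(big_mkord xpredT (fun j => iter j T (A q`_j v))).
rewrite (big_cat_nat (leq0n _) le_qn) /= [X in _ = _ + X]big1_seq ?addr0 //.
move=> j /andP[_]; rewrite mem_index_iota => /andP[le_qj _].
by rewrite nth_default // act0 // (lin0 (linear_iter T_lin _)).
Qed.

Lemma poly_action_linear q : linear (poly_action q).
Proof.
move=> c u v; rewrite /poly_action scaler_sumr -big_split; apply: eq_bigr => j _.
by rewrite (act_linear hA); apply: linear_iter.
Qed.

Lemma poly_actionD q1 q2 v :
  poly_action (q1 + q2) v = poly_action q1 v + poly_action q2 v.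
Proof.
set n := maxn (size q1) (size q2).
rewrite !(@poly_action_bound _ n) ?size_polyD ?leq_maxl ?leq_maxr // -big_split.
by apply: eq_bigr => j _; rewrite coefD actD // (linD (linear_iter T_lin _)).
Qed.

Lemma poly_action0 v : poly_action 0 v = 0.
Proof. by rewrite /poly_action size_poly0 big_ord0. Qed.

Lemma poly_action_mulX q v : poly_action (q * 'X) v = T (poly_action q v).
Proof.
rewrite (@poly_action_bound _ (size q).+1); last first.
  by apply: leq_trans (size_polyMleq _ _) _; rewrite size_polyX addn2.
rewrite big_ord_recl coefMX eqxx act0 // (lin0 (linear_iter T_lin _)) add0r.
by rewrite /poly_action lin_sum //; apply: eq_bigr => j _; rewrite coefMX.
Qed.

Lemma poly_action_CM c q v : poly_action (c%:P * q) v = A c (poly_action q v).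
Proof.
rewrite (@poly_action_bound _ (size q)); last by rewrite mul_polyC size_scale_leq.
rewrite /poly_action actv_sum //.
by apply: eq_bigr => j _; rewrite coefCM actM // iterT_act.
Qed.

Lemma poly_actionC c v : poly_action c%:P v = A c v.
Proof. by rewrite (@poly_action_bound _ 1) ?size_polyC_leq1 // big_ord1 coefC. Qed.

Lemma poly_actionX v : poly_action 'X v = T v.
Proof. by rewrite -['X]mul1r poly_action_mulX -polyC1 poly_actionC act1. Qed.

Lemma poly_actionM q1 q2 v :
  poly_action (q1 * q2) v = poly_action q1 (poly_action q2 v).
Proof.
elim/poly_ind: q1 => [|q c IHq]; first by rewrite mul0r !poly_action0.
rewrite mulrDl -mulrA -(commr_polyX q2) mulrA !poly_actionD !poly_action_mulX.
by rewrite IHq poly_action_CM poly_actionC.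
Qed.

Lemma poly_action_ring_action : ring_action poly_action.
Proof.
split; [exact: poly_action_linear | exact: poly_actionD | exact: poly_actionM |].
by move=> v; rewrite -polyC1 poly_actionC act1.
Qed.

Lemma poly_action_comm (S : V -> V) : linear S -> (forall v, S (T v) = T (S v)) ->
  (forall r v, S (A r v) = A r (S v)) ->
  forall q v, S (poly_action q v) = poly_action q (S v).
Proof.
move=> S_lin ST SA q v; rewrite /poly_action lin_sum //.
apply: eq_bigr => j _; rewrite -SA; move: (A q`_j v) => u.
by elim: (nat_of_ord j) => //= n <-; rewrite ST.
Qed.

End PolyAction.

Section LocalSpans.
Variables (R : comNzRingType) (A : R -> V -> V) (hA : ring_action A).
Variables (I : eqType) (w : I -> V) (s : seq I).

Definition in_span v := exists c : I -> R, v = \sum_(i <- s) A (c i) (w i).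

(* The R[1/g]-submodule generated by the [w i]. *)
Definition in_local_span (g : R) v := exists b, in_span (A (g ^+ b) v).

Lemma in_span0 : in_span 0.
Proof. by exists (fun => 0); rewrite big1 // => i _; rewrite act0. Qed.

Lemma in_spanD u v : in_span u -> in_span v -> in_span (u + v).
Proof.
move=> [c ->] [d ->]; exists (fun i => c i + d i).
by rewrite -big_split; apply: eq_bigr => i _; rewrite actD.
Qed.

Lemma in_span_act r u : in_span u -> in_span (A r u).
Proof.
move=> [c ->]; exists (fun i => r * c i).
by rewrite actv_sum //; apply: eq_bigr => i _; rewrite actM.
Qed.

Lemma in_span_sum (J : eqType) (l : seq J) (F : J -> V) :
  (forall x, x \in l -> in_span (F x)) -> in_span (\sum_(x <- l) F x).
Proof.
elim: l => [|a l IHl] inF; first by rewrite big_nil; apply: in_span0.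
rewrite big_cons; apply: in_spanD; first by apply: inF; rewrite mem_head.
by apply: IHl => x lx; apply: inF; rewrite inE lx orbT.
Qed.

Lemma in_span_gen i : uniq s -> i \in s -> in_span (w i).
Proof.
move=> s_uniq si; exists (fun j => (j == i)%:R).
rewrite (bigD1_seq i) //= eqxx act1 // big1 ?addr0 // => j /negPf ->.
exact: act0.
Qed.

Lemma in_local_span_span g v : in_span v -> in_local_span g v.
Proof. by exists 0%N; rewrite act1. Qed.

Lemma in_local_spanD g u v :
  in_local_span g u -> in_local_span g v -> in_local_span g (u + v).
Proof.
move=> [b1 u_in] [b2 v_in]; exists (b1 + b2)%N; rewrite actvD // exprD.
by apply: in_spanD; [rewrite mulrC|]; rewrite actM //; apply: in_span_act.
Qed.

Lemma in_local_span_op g (T : V -> V) : linear T ->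
  (forall r v, T (A r v) = A r (T v)) ->
  (forall i, i \in s -> in_span (A g (T (w i)))) ->
  forall u, in_local_span g u -> in_local_span g (T u).
Proof.
move=> T_lin TA gT_in u [b [c gu]]; exists b.+1.
rewrite exprS actM // -TA gu lin_sum // actv_sum //.
by apply: in_span_sum => i si; rewrite TA actC //; apply/in_span_act/gT_in.
Qed.

Lemma in_local_span_act g r u : in_local_span g u -> in_local_span g (A r u).
Proof. by move=> [b gu]; exists b; rewrite actC //; apply: in_span_act. Qed.

End LocalSpans.

Lemma finite_dim_of_span (I : eqType) (w : I -> V) (s : seq I) :
  (forall v, in_span *:%R w s v) -> finite_dim V.
Proof.
move=> spanned; exists (size s), (fun j => w (tnth (in_tuple s) j)) => v.
by have [c ->] := spanned v; exists (fun j => c (tnth (in_tuple s) j)); rewrite big_tnth.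
Qed.

(* For a = 0 this holds because then V = 0 (and 0^-1 = 0). *)
Lemma scalar_inverse (X Xi : V -> V) (a : k) :
  cancel Xi X -> (forall v, X v = a *: v) -> forall v, Xi v = a^-1 *: v.
Proof.
move=> XiK Xa v; have [a0 | nz_a] := eqVneq a 0.
  have V0 (u : V) : u = 0 by rewrite -(XiK u) Xa a0 scale0r.
  by rewrite [LHS]V0 [RHS]V0.
by rewrite -{2}(XiK v) Xa scalerA mulVf // scale1r.
Qed.

(* [R] is not a Goldman domain: no localization R[1/g] is its fraction field. *)
Definition nonGoldman (R : idomainType) :=
  forall g : R, g != 0 -> exists2 h : R, h != 0 & forall b c, g ^+ b != h * c.

Section GoldmanObstruction.
Variables (R : idomainType) (A : R -> V -> V) (hA : ring_action A).
Hypothesis act_invertible : forall r, r != 0 -> invertible (A r).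
Variables (I : eqType) (w : I -> V).

Lemma local_span_rem s g i0 c : uniq s -> i0 \in s -> c i0 != 0 ->
  \sum_(i <- s) A (c i) (w i) = 0 ->
  (forall v, in_local_span A w s g v) ->
  forall v, in_local_span A w (rem i0 s) (g * c i0) v.
Proof.
move=> s_uniq si0 nz_c0 rel spanned v; have [b [d gv]] := spanned v.
set q := c i0; exists b.+1.
have wi0 : A q (w i0) = - \sum_(i <- s | i != i0) A (c i) (w i).
  by apply/eqP; rewrite -addr_eq0 -(bigD1_seq i0) //; apply/eqP.
have -> : (g * q) ^+ b.+1 = g * q ^+ b * (q * g ^+ b) by rewrite exprS exprMn; ring.
rewrite actM // [A (q * _) v]actM // gv (bigD1_seq i0) //= actvD // actC // wi0.
rewrite actvN // !actv_sum // -sumrN -big_split /=.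
apply: in_span_act => //; exists (fun i => q * d i - d i0 * c i).
rewrite rem_filter // big_filter.
by apply: eq_bigr => i _; rewrite actB // !actM // addrC.
Qed.

Lemma local_span_independent s g j : nonGoldman R -> uniq s -> g != 0 -> j \in s ->
  (forall c, \sum_(i <- s) A (c i) (w i) = 0 -> forall i, i \in s -> c i = 0) ->
  ~ (forall v, in_local_span A w s g v).
Proof.
move=> R_nG s_uniq nz_g sj indep spanned; have [h nz_h h_ndvd] := R_nG g nz_g.
have [u hu] := (act_invertible nz_h).2 (w j).
have [b [d gu]] := spanned u.
have rel : \sum_(i <- s) A (h * d i - (i == j)%:R * g ^+ b) (w i) = 0.
  under eq_bigr do rewrite actB // !actM //.
  rewrite sumrB -actv_sum // -gu actC // hu (bigD1_seq j) //= eqxx act1 //.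
  by rewrite big1 ?addr0 ?subrr // => i /negPf->; rewrite act0.
move: (indep _ rel j sj); rewrite eqxx mul1r => /eqP; rewrite subr_eq0 eq_sym.
by rewrite (negPf (h_ndvd b (d j))).
Qed.

(* Induction on the number of generators: a nontrivial relation lets one drop a
   generator at the cost of inverting its coefficient, while for independent
   generators an h dividing no power of g cannot have an inverse in R[1/g]. *)
Lemma no_finite_local_span s g : nonGoldman R -> (exists v : V, v != 0) ->
  uniq s -> g != 0 -> ~ (forall v, in_local_span A w s g v).
Proof.
move=> R_nG [v0 nz_v0]; have [n] := ubnP (size s).
elim: n s g => // n IHn s g lt_s_n s_uniq nz_g spanned.
case: s lt_s_n s_uniq spanned => [|j s'] lt_s_n s_uniq spanned.
  have [b [d gv0]] := spanned v0; rewrite big_nil in gv0.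
  by move: nz_v0; rewrite ((act_invertible (expf_neq0 b nz_g)).1 v0 gv0) eqxx.
have [[c [i0 [rel si0 nz_c]]]|indep] := classic (exists c i0,
  [/\ \sum_(i <- j :: s') A (c i) (w i) = 0, i0 \in j :: s' & c i0 != 0]).
  apply: (IHn (rem i0 (j :: s')) (g * c i0)); rewrite ?rem_uniq ?mulf_neq0 //.
    by rewrite size_rem.
  exact: local_span_rem.
apply: (local_span_independent R_nG s_uniq nz_g (mem_head j s')) spanned.
move=> c rel i si; case: (eqVneq (c i) 0) => // nz_c.
by case: indep; exists c, i.
Qed.

End GoldmanObstruction.

End RingActions.

Arguments scale_action {k V}.

Lemma nonGoldman_eval (R S : idomainType) :
  (forall g : R, g != 0 ->
     exists (phi : {rmorphism R -> S}) (h : R), [/\ phi g != 0, h != 0 & phi h = 0]) ->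
  nonGoldman R.
Proof.
move=> sep g nz_g; have [phi [h [nz_phig nz_h phih0]]] := sep g nz_g.
exists h => // b c; apply: contra nz_phig => /eqP/(congr1 phi).
by rewrite rmorphXn rmorphM phih0 mul0r => /eqP; rewrite expf_eq0 => /andP[].
Qed.

Lemma poly_nonGoldman (k : closedFieldType) : nonGoldman {poly k}.
Proof.
apply: nonGoldman_eval => g /closed_nonrootP[c nz_gc].
exists (horner_eval c), ('X - c%:P).
by rewrite /= /horner_eval polyXsubC_eq0 hornerXsubC subrr.
Qed.

Lemma bipoly_nonGoldman (k : closedFieldType) : nonGoldman {poly {poly k}}.
Proof.
apply: nonGoldman_eval => g nz_g.
have /closed_nonrootP[c nz_lc] : lead_coef g != 0 by rewrite lead_coef_eq0.
have eval_h : map_poly (horner_eval c) ('X - c%:P)%:P = 0.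
  by rewrite map_polyC; congr (_%:P); apply/rootP; rewrite root_XsubC.
exists (map_poly (horner_eval c) : {rmorphism {poly {poly k}} -> {poly k}}).
exists ('X - c%:P)%:P; split; rewrite ?polyC_eq0 ?polyXsubC_eq0 //.
by rewrite -lead_coef_eq0 lead_coef_map_eq.
Qed.

Section LaurentSpan.
Variables (k : fieldType) (V : lmodType k) (X Xi Y Yi : V -> V).
Variables (I : eqType) (w : I -> V) (s : seq I).

Inductive laurent_span : V -> Prop :=
| laurent_span_gen i : i \in s -> laurent_span (w i)
| laurent_span0 : laurent_span 0
| laurent_spanD u v : laurent_span u -> laurent_span v -> laurent_span (u + v)
| laurent_spanZ (c : k) u : laurent_span u -> laurent_span (c *: u)
| laurent_spanX u : laurent_span u -> laurent_span (X u)
| laurent_spanXi u : laurent_span u -> laurent_span (Xi u)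
| laurent_spanY u : laurent_span u -> laurent_span (Y u)
| laurent_spanYi u : laurent_span u -> laurent_span (Yi u).

End LaurentSpan.

Lemma laurent_span_swap (k : fieldType) (V : lmodType k) (X Xi Y Yi : V -> V)
    (I : eqType) (w : I -> V) (s : seq I) v :
  laurent_span X Xi Y Yi w s v -> laurent_span Y Yi X Xi w s v.
Proof. by elim; constructor. Qed.

Section SchurPair.
Variables (k : closedFieldType) (V : lmodType k) (G : Type) (act : G -> V -> V).
Hypothesis act_lin : forall g, linear (act g).
Hypothesis schur : forall P : V -> V, linear P ->
  (forall g v, P (act g v) = act g (P v)) -> (forall v, P v = 0) \/ invertible P.
Hypothesis V_nontrivial : exists v : V, v != 0.
Variables (I : eqType) (w : I -> V) (s : seq I).

Section CommutingAutomorphisms.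
Variables (X Xi Y Yi : V -> V).
Hypotheses (X_lin : linear X) (Xi_lin : linear Xi) (Y_lin : linear Y) (Yi_lin : linear Yi).
Hypotheses (XiK : cancel Xi X) (XK : cancel X Xi) (YiK : cancel Yi Y) (YK : cancel Y Yi).
Hypothesis XY : forall v, X (Y v) = Y (X v).
Hypotheses (X_act : forall g v, X (act g v) = act g (X v))
           (Y_act : forall g v, Y (act g v) = act g (Y v)).
Hypothesis spanned : forall v, laurent_span X Xi Y Yi w s v.

Lemma comm_YX v : Y (X v) = X (Y v). Proof. by rewrite XY. Qed.
Lemma comm_XiX v : Xi (X v) = X (Xi v). Proof. by rewrite XK XiK. Qed.
Lemma comm_YiX v : Yi (X v) = X (Yi v). Proof. by rewrite -{1}(YiK v) XY YK. Qed.
Lemma comm_XiY v : Xi (Y v) = Y (Xi v). Proof. by rewrite -{1}(XiK v) -XY XK. Qed.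
Lemma comm_YiY v : Yi (Y v) = Y (Yi v). Proof. by rewrite YK YiK. Qed.

Let evX := poly_action ( *:%R : k -> V -> V) X.
Let evXY := poly_action evX Y.

Lemma evX_action : ring_action evX.
Proof. exact: (poly_action_ring_action scale_action X_lin (linZ X_lin)). Qed.

Lemma evX_comm (S : V -> V) : linear S -> (forall v, S (X v) = X (S v)) ->
  forall q v, S (evX q v) = evX q (S v).
Proof. by move=> S_lin SX; apply: poly_action_comm => // c v; rewrite linZ. Qed.

Lemma evXY_action : ring_action evXY.
Proof. exact: (poly_action_ring_action evX_action Y_lin (evX_comm Y_lin comm_YX)). Qed.

Lemma evXY_comm (S : V -> V) : linear S -> (forall v, S (X v) = X (S v)) ->
  (forall v, S (Y v) = Y (S v)) -> forall q v, S (evXY q v) = evXY q (S v).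
Proof. by move=> S_lin SX SY; apply: poly_action_comm => //; apply: evX_comm. Qed.

Lemma evX_C c v : evX c%:P v = c *: v.
Proof. exact: (poly_actionC scale_action X_lin). Qed.
Lemma evX_X v : evX 'X v = X v.
Proof. exact: (poly_actionX scale_action X_lin). Qed.
Lemma evXY_C q v : evXY q%:P v = evX q v.
Proof. exact: (poly_actionC evX_action Y_lin). Qed.
Lemma evXY_X v : evXY 'X v = Y v.
Proof. exact: (poly_actionX evX_action Y_lin). Qed.

Lemma evXY_schur F : (forall v, evXY F v = 0) \/ invertible (evXY F).
Proof.
apply: schur; first exact: (act_linear evXY_action).
by move=> g v; symmetry; apply: evXY_comm.
Qed.

Lemma evX_schur q : (forall v, evX q v = 0) \/ invertible (evX q).
Proof.
case: (evXY_schur q%:P) => [ann | [inj surj]]; [left | right; split] => u.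
- by rewrite -evXY_C.
- by rewrite -evXY_C; apply: inj.
- by have [v <-] := surj u; exists v; rewrite evXY_C.
Qed.

Lemma scale_annihilator_eq0 (c : k) : (forall v : V, c *: v = 0) -> c = 0.
Proof.
move=> ann; have [v nz_v] := V_nontrivial; apply/eqP; apply: contraNT nz_v => nz_c.
by have /eqP := ann v; rewrite scaler_eq0 (negPf nz_c).
Qed.

Lemma annihilated_scalar q : q != 0 -> (forall v, evX q v = 0) ->
  exists a, forall v, X v = a *: v.
Proof.
have [n] := ubnP (size q); elim: n q => // n IHn q lt_qn nz_q ann.
have [q1 | q_ne1] := eqVneq (size q) 1%N.
  have q_const := size1_polyC (eq_leq q1).
  move: nz_q; rewrite q_const polyC_eq0 (scale_annihilator_eq0 (c := q`_0)) ?eqxx //.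
  by move=> v; rewrite -evX_C -q_const.
have [a /factor_theorem [q' def_q]] := closed_rootP q q_ne1.
have nz_q' : q' != 0 by apply: contraNneq nz_q => q'0; rewrite def_q q'0 mul0r.
have evX_Xa v : evX ('X - a%:P) v = X v - a *: v.
  by rewrite (actB evX_action) evX_X evX_C.
case: (evX_schur ('X - a%:P)) => [Xa0 | [_ surj]].
  by exists a => v; apply/eqP; rewrite -subr_eq0 -evX_Xa Xa0.
apply: (IHn q') => // [|u].
  by move: lt_qn; rewrite def_q size_mul ?polyXsubC_eq0 // size_XsubC addn2.
by have [v <-] := surj u; rewrite -(actM evX_action) -def_q ann.
Qed.

Lemma evXY_Xn t v : evXY ('X ^+ t) v = iter t Y v.
Proof.
elim: t => [|t IHt]; first by rewrite expr0 (act1 evXY_action).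
by rewrite exprS (actM evXY_action) IHt evXY_X.
Qed.

Lemma iterYK t : cancel (iter t Yi) (iter t Y).
Proof. by elim: t => // t IHt u; rewrite iterSr iterS YiK. Qed.

Lemma iterY_evX j q v : iter j Y (evX q v) = evX q (iter j Y v).
Proof. by elim: j => //= j ->; rewrite (evX_comm Y_lin comm_YX). Qed.

(* If D(X, Y) = 0 with D_0 != 0, then V is generated over k[X][1/(X D_0 D_n)]
   by the Y^j w_i with j < n = deg_Y D. *)
Section AlgebraicY.
Hypothesis evX_inv : forall q, q != 0 -> invertible (evX q).

Lemma annihilator_normalize F : F != 0 -> (forall v, evXY F v = 0) ->
  exists D : {poly {poly k}}, [/\ D`_0 != 0, (1 < size D)%N & forall v, evXY D v = 0].
Proof.
move=> nz_F F_ann.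
have F_nz_coef : exists t, F`_t != 0.
  by exists (size F).-1; rewrite -lead_coefE lead_coef_eq0.
have [t Ft t_min] := ex_minnP F_nz_coef.
pose D := drop_poly t F; exists D.
have def_F : F = D * 'X^t.
  rewrite -[LHS](poly_take_drop t) [take_poly t F](_ : _ = 0) ?add0r //.
  apply/polyP => i; rewrite coef_take_poly coef0; case: ltnP => // lt_it.
  by apply/eqP; apply: contraTT lt_it => /t_min; rewrite -leqNgt.
have D_ann v : evXY D v = 0.
  by rewrite -(iterYK t v) -evXY_Xn -(actM evXY_action) -def_F.
have D0 : D`_0 = F`_t by rewrite coef_drop_poly.
split=> //; first by rewrite D0.
rewrite ltnNge; apply/negP => /size1_polyC D_const.
have [v nz_v] := V_nontrivial; have [inj _] := evX_inv Ft.
by move: nz_v; rewrite (inj v) ?eqxx // -D0 -evXY_C -D_const.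
Qed.

Variable D : {poly {poly k}}.
Hypotheses (D0 : D`_0 != 0) (D_size : (1 < size D)%N) (D_ann : forall v, evXY D v = 0).

Let n := (size D).-1.
Let gens := [seq (j, i) | j <- iota 0 n, i <- undup s].
Let gen (x : nat * I) := iter x.1 Y (w x.2).

Lemma mem_gens j i : ((j, i) \in gens) = (j < n)%N && (i \in s).
Proof.
apply/allpairsP/andP => [[[j' i'] /= [j'_n i'_s [-> ->]]] | [lt_jn si]].
  by rewrite mem_iota in j'_n; rewrite -mem_undup.
by exists (j, i); rewrite mem_iota mem_undup.
Qed.

Lemma gens_uniq : uniq gens.
Proof.
by apply: allpairs_uniq; [apply: iota_uniq | apply: undup_uniq | move=> [? ?] [? ?] _ _].
Qed.

Lemma gen_in_span j i : (j < n)%N -> i \in s -> in_span evX gen gens (iter j Y (w i)).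
Proof.
move=> lt_jn si; apply: (in_span_gen evX_action gen (i := (j, i)) gens_uniq).
by rewrite mem_gens lt_jn.
Qed.

Lemma size_D : size D = n.+1.
Proof. by rewrite prednK // ltnW. Qed.

Lemma ev2D_expand v : \sum_(j < n.+1) iter j Y (evX D`_j v) = 0.
Proof. by rewrite -[RHS](D_ann v) /evXY /poly_action size_D. Qed.

Lemma D_relation_lead v : evX (lead_coef D) (iter n Y v) = - \sum_(j < n) evX D`_j (iter j Y v).
Proof.
apply/eqP; rewrite -addr_eq0 addrC; apply/eqP; rewrite -[RHS](ev2D_expand v) big_ord_recr /=.
by rewrite lead_coefE -iterY_evX; congr (_ + _); apply: eq_bigr => j _; rewrite iterY_evX.
Qed.

Lemma D_relation_const v : evX D`_0 (Yi v) = - \sum_(j < n) evX D`_j.+1 (iter j Y v).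
Proof.
apply/eqP; rewrite -addr_eq0; apply/eqP; rewrite -[RHS](ev2D_expand (Yi v)) big_ord_recl /=.
congr (_ + _); apply: eq_bigr => j _.
by rewrite /bump /= add1n add0n -iterS iterY_evX iterSr YiK.
Qed.

Lemma gen_Y x : x \in gens -> in_span evX gen gens (evX (lead_coef D) (Y (gen x))).
Proof.
case: x => j i; rewrite mem_gens => /andP[lt_jn si] /=; rewrite -iterS.
have [lt_j1n | le_nj1] := ltnP j.+1 n.
  exact/(in_span_act evX_action)/gen_in_span.
have -> : j.+1 = n by apply/eqP; rewrite eqn_leq lt_jn.
rewrite D_relation_lead -sumrN; apply: (in_span_sum evX_action) => j' _.
by rewrite -(actN evX_action); apply/(in_span_act evX_action)/gen_in_span.
Qed.

Lemma gen_Yi x : x \in gens -> in_span evX gen gens (evX D`_0 (Yi (gen x))).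
Proof.
case: x => [[|j] i]; rewrite mem_gens => /andP[lt_jn si] /=.
  rewrite D_relation_const -sumrN; apply: (in_span_sum evX_action) => j' _.
  by rewrite -(actN evX_action); apply/(in_span_act evX_action)/gen_in_span.
by rewrite YK; apply/(in_span_act evX_action)/gen_in_span => //; apply: ltnW.
Qed.

Lemma algebraic_local_span v : in_local_span evX gen gens ('X * D`_0 * lead_coef D) v.
Proof.
elim: (spanned v) => {v} [i si | | u v _ ? _ ? | c u _ ? | u _ ? | u _ ? | u _ ? | u _ ?].
- by apply/(in_local_span_span evX_action)/(gen_in_span (j := 0)); move: D_size; rewrite size_D.
- exact/(in_local_span_span evX_action)/(in_span0 evX_action).
- exact: (in_local_spanD evX_action).
- by rewrite -evX_C; apply: (in_local_span_act evX_action).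
- by rewrite -evX_X; apply: (in_local_span_act evX_action).
- apply: (in_local_span_op evX_action Xi_lin (evX_comm Xi_lin comm_XiX)) => // x gx.
  rewrite -mulrA mulrC (actM evX_action) evX_X XiK.
  exact/(in_span_act evX_action)/(in_span_gen evX_action gen gens_uniq gx).
- apply: (in_local_span_op evX_action Y_lin (evX_comm Y_lin comm_YX)) => // x gx.
  by rewrite (actM evX_action); apply/(in_span_act evX_action)/gen_Y.
- apply: (in_local_span_op evX_action Yi_lin (evX_comm Yi_lin comm_YiX)) => // x gx.
  by rewrite mulrAC (actM evX_action); apply/(in_span_act evX_action)/gen_Yi.
Qed.

Lemma algebraic_Y_contra : False.
Proof.
have nz_g : 'X * D`_0 * lead_coef D != 0.
  by rewrite !mulf_neq0 ?polyX_eq0 // lead_coef_eq0 -size_poly_eq0 size_D.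
exact: (no_finite_local_span evX_action evX_inv (@poly_nonGoldman k) V_nontrivial
  gens_uniq nz_g algebraic_local_span).
Qed.

End AlgebraicY.

Section TranscendentalXY.
Hypothesis evXY_inv : forall F, F != 0 -> invertible (evXY F).

Lemma transcendental_local_span v : in_local_span evXY w (undup s) ('X%:P * 'X) v.
Proof.
have s_uniq := undup_uniq s.
have w_in i : i \in s -> in_span evXY w (undup s) (w i).
  by move=> si; apply: (in_span_gen evXY_action w s_uniq); rewrite mem_undup.
elim: (spanned v) => {v} [i si | | u v _ ? _ ? | c u _ ? | u _ ? | u _ ? | u _ ? | u _ ?].
- exact/(in_local_span_span evXY_action)/w_in.
- exact/(in_local_span_span evXY_action)/(in_span0 evXY_action).
- exact: (in_local_spanD evXY_action).
- by rewrite -evX_C -evXY_C; apply: (in_local_span_act evXY_action).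
- by rewrite -evX_X -evXY_C; apply: (in_local_span_act evXY_action).
- apply: (in_local_span_op evXY_action Xi_lin (evXY_comm Xi_lin comm_XiX comm_XiY)) => // i.
  rewrite mem_undup => si; rewrite mulrC (actM evXY_action) evXY_C evX_X XiK.
  exact/(in_span_act evXY_action)/w_in.
- by rewrite -evXY_X; apply: (in_local_span_act evXY_action).
- apply: (in_local_span_op evXY_action Yi_lin (evXY_comm Yi_lin comm_YiX comm_YiY)) => // i.
  rewrite mem_undup => si; rewrite (actM evXY_action) evXY_X YiK.
  exact/(in_span_act evXY_action)/w_in.
Qed.

Lemma transcendental_XY_contra : False.
Proof.
have nz_g : 'X%:P * 'X != 0 :> {poly {poly k}}.
  by rewrite mulf_neq0 ?polyC_eq0 ?polyX_eq0.
exact: (no_finite_local_span evXY_action evXY_inv (@bipoly_nonGoldman k) V_nontrivial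
  (undup_uniq s) nz_g transcendental_local_span).
Qed.

End TranscendentalXY.

Lemma X_scalar : exists a, forall v, X v = a *: v.
Proof.
have [[q [nz_q q_ann]] | X_transc] := classic (exists q, q != 0 /\ forall v, evX q v = 0).
  exact: annihilated_scalar nz_q q_ann.
have evX_inv q : q != 0 -> invertible (evX q).
  by move=> nz_q; case: (evX_schur q) => // q_ann; case: X_transc; exists q.
exfalso; have [[F [nz_F F_ann]] | XY_transc] :=
  classic (exists F, F != 0 /\ forall v, evXY F v = 0).
  have [D [D0 D_size D_ann]] := annihilator_normalize evX_inv nz_F F_ann.
  exact: (algebraic_Y_contra evX_inv D0 D_size D_ann).
apply: transcendental_XY_contra => F nz_F; case: (evXY_schur F) => // F_ann.
by case: XY_transc; exists F.
Qed.

End CommutingAutomorphisms.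

Lemma laurent_span_finite_dim (X Xi Y Yi : V -> V) :
  linear X -> linear Xi -> linear Y -> linear Yi ->
  cancel Xi X -> cancel X Xi -> cancel Yi Y -> cancel Y Yi ->
  (forall v, X (Y v) = Y (X v)) ->
  (forall g v, X (act g v) = act g (X v)) -> (forall g v, Y (act g v) = act g (Y v)) ->
  (forall v, laurent_span X Xi Y Yi w s v) -> finite_dim V.
Proof.
move=> X_lin Xi_lin Y_lin Yi_lin XiK XK YiK YK XY X_act Y_act spanned.
have [a Xa] := X_scalar X_lin Xi_lin Y_lin Yi_lin XiK XK YiK YK XY X_act Y_act spanned.
have [b Yb] := X_scalar Y_lin Yi_lin X_lin Xi_lin YiK YK XiK XK (fun v => esym (XY v))
  Y_act X_act (fun v => laurent_span_swap (spanned v)).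
apply: (finite_dim_of_span (s := undup s)) => v.
elim: (spanned v) => {v} [i si | | u v _ ? _ ? | c u _ ? | u _ ? | u _ ? | u _ ? | u _ ?].
- by apply: (in_span_gen scale_action); rewrite ?undup_uniq ?mem_undup.
- exact: (in_span0 scale_action).
- exact: (in_spanD scale_action).
- exact: (in_span_act scale_action).
- by rewrite Xa; apply: (in_span_act scale_action).
- by rewrite (scalar_inverse XiK Xa); apply: (in_span_act scale_action).
- by rewrite Yb; apply: (in_span_act scale_action).
- by rewrite (scalar_inverse YiK Yb); apply: (in_span_act scale_action).
Qed.

End SchurPair.

Section Torus.
Variable p : nat.

Lemma Zpx_ext (x y : Zpx p) : zf x =1 zf y -> x = y.
Proof.
case: x y => [fx nx cx ux] [fy ny cy uy] /= /functional_extensionality e.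
by subst fy; f_equal; apply: proof_irrelevance.
Qed.

Lemma Zpx_mulC (x y : Zpx p) : Zpx_mul x y = Zpx_mul y x.
Proof. by apply: Zpx_ext => n /=; rewrite mulnC. Qed.

Lemma Zpx_mulA (x y z : Zpx p) : Zpx_mul x (Zpx_mul y z) = Zpx_mul (Zpx_mul x y) z.
Proof. by apply: Zpx_ext => n /=; rewrite modnMmr modnMml mulnA. Qed.

Lemma Zpx_mul1 (x : Zpx p) : Zpx_mul x (Zpx_one p) = x.
Proof. by apply: Zpx_ext => n /=; rewrite modnMmr muln1 zf_norm. Qed.

Lemma Zpx_mul1l (x : Zpx p) : Zpx_mul (Zpx_one p) x = x.
Proof. by rewrite Zpx_mulC Zpx_mul1. Qed.

Lemma Qpx_mulC (x y : Qpx p) : Qpx_mul x y = Qpx_mul y x.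
Proof. by rewrite /Qpx_mul addrC Zpx_mulC. Qed.

Lemma T_mulC (s t : T p) : T_mul s t = T_mul t s.
Proof. by rewrite /T_mul Qpx_mulC [Qpx_mul s.2 _]Qpx_mulC. Qed.

Lemma T_mul1 (t : T p) : T_mul t (Qpx_one p, Qpx_one p) = t.
Proof. by case: t => [[a u] [b v]]; rewrite /T_mul /Qpx_mul /= !addr0 !Zpx_mul1. Qed.

Lemma zf_modp (u : Zpx p) n : (zf u n %% p)%N = zf u 0.
Proof.
elim: n => [|n IHn]; first by rewrite -[in RHS](zf_norm u 0) expn1.
by rewrite -IHn -(zf_compat u n) modn_dvdm // dvdn_exp.
Qed.

Lemma zf_coprime (u : Zpx p) n : coprime (zf u n) p.
Proof. by rewrite -coprime_modl zf_modp zf_unit. Qed.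

Lemma omegaM (x y : Qpx p) : prime p -> omega (Qpx_mul x y) = omega x * omega y.
Proof. by move=> p_pr; rewrite /omega /= expn1 Fp_nat_mod // natrM. Qed.

Lemma omega_ppow (n : int) : prime p -> omega (n, Zpx_one p) = 1.
Proof. by move=> p_pr; rewrite /omega /= expn1 Fp_nat_mod. Qed.

Lemma omega_neq0 (x : Qpx p) : prime p -> omega x != 0.
Proof.
move=> p_pr; rewrite /omega -(dvdn_pcharf (pchar_Fp p_pr)) -prime_coprime // coprime_sym.
exact: zf_unit.
Qed.

End Torus.

Section HilbertSymbol.
Variable p : nat.
Hypotheses (p_pr : prime p) (p_odd : odd p).

Lemma Fp_sqr_half_exp (y : 'F_p) : y != 0 -> (y ^+ 2) ^+ ((p - 1) %/ 2) = 1.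
Proof.
move=> nz_y; rewrite -exprM mulnC divnK; last first.
  by rewrite dvdn2 subn1 -oddS prednK ?prime_gt0.
apply: (mulIf nz_y); rewrite mul1r -exprSr subn1 prednK ?prime_gt0 //.
by have := expf_card y; rewrite card_Fp.
Qed.

Lemma Fp_one_neq_m1 : (1 : 'F_p) != -1.
Proof.
rewrite -subr_eq0 opprK -(natrD _ 1 1) -(dvdn_pcharf (pchar_Fp p_pr)).
apply: contraL p_odd => /(dvdn_leq (isT : 0 < 2)%N) le_p2.
by have /eqP -> : p == 2%N by rewrite eqn_leq le_p2 prime_gt1.
Qed.

Lemma hilbert_sqr (a b : Qpx p) (y : 'F_p) : y != 0 ->
  (-1) ^ (vp a * vp b) * omega b ^ vp a / omega a ^ vp b = y ^+ 2 -> hilbert a b = false.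
Proof.
move=> nz_y base_sqr; rewrite /hilbert /hilbert_F base_sqr Fp_sqr_half_exp //.
exact: negPf Fp_one_neq_m1.
Qed.

Lemma hilbert_squarel (a b : Qpx p) (m : int) :
  vp a = m * 2 -> omega a = 1 -> hilbert a b = false.
Proof.
move=> va oa; pose y := (-1) ^ (m * vp b) * omega b ^ m.
apply: (@hilbert_sqr _ _ y).
  by rewrite mulf_neq0 ?expfz_neq0 ?omega_neq0 // oppr_eq0 oner_eq0.
by rewrite va oa exp1rz invr1 mulr1 /y exprMn mulrAC -!exprz_exp -!exprnP.
Qed.

Lemma hilbert_squarer (a b : Qpx p) (m : int) :
  vp b = m * 2 -> omega b = 1 -> hilbert a b = false.
Proof.
move=> vb ob; pose y := (-1) ^ (vp a * m) / omega a ^ m.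
apply: (@hilbert_sqr _ _ y).
  by rewrite mulf_neq0 ?invr_eq0 ?expfz_neq0 ?omega_neq0 // oppr_eq0 oner_eq0.
by rewrite vb ob exp1rz mulr1 /y exprMn exprVn mulrA -!exprz_exp -!exprnP.
Qed.

End HilbertSymbol.

Section CentralSquares.
Variable p : nat.
Hypotheses (p_pr : prime p) (p_odd : odd p).

Definition zdiag (a b : int) : T p := ((a * 2, Zpx_one p), (b * 2, Zpx_one p)).

Lemma zdiagD a b c d : T_mul (zdiag a b) (zdiag c d) = zdiag (a + c) (b + d).
Proof. by rewrite /T_mul /zdiag /Qpx_mul /= !Zpx_mul1 !mulrDl. Qed.

Lemma zdiag00 : zdiag 0 0 = (Qpx_one p, Qpx_one p).
Proof. by rewrite /zdiag mul0r. Qed.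

Lemma sigma_zdiag a b c d : sigmaT (zdiag a b) (zdiag c d) = false.
Proof. by apply: (hilbert_squarel p_pr p_odd _ (m := d)); rewrite ?omega_ppow. Qed.

Lemma sigmaT1 t : sigmaT t (Qpx_one p, Qpx_one p) = false.
Proof. by apply: (hilbert_squarel p_pr p_odd _ (m := 0)); rewrite ?mul0r ?omega_ppow. Qed.

(* The entries of [zdiag a b] are squares with residue 1, which lie in the
   radical of the Hilbert symbol. *)
Lemma zdiag_central a b g : Tt_mul (zdiag a b, false) g = Tt_mul g (zdiag a b, false).
Proof.
rewrite /Tt_mul /sigmaT /= T_mulC; congr pair.
rewrite (hilbert_squarer p_pr p_odd _ (m := a + b + b)) /=; last first.
- by rewrite !omegaM ?omega_ppow ?mulr1.
- by rewrite !mulrDl.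
by rewrite (hilbert_squarel p_pr p_odd _ (m := b)) ?omega_ppow //; case: g.2.
Qed.

End CentralSquares.

Section TorusRepresentation.
Variables (p : nat) (k : fieldType) (V : lmodType k) (pi : Ttilde p -> {linear V -> V}).
Hypotheses (p_pr : prime p) (p_odd : odd p) (pi_rep : is_rep pi) (pi_gen : genuine pi).

Definition piT (t : T p) : V -> V := pi (t, false).

Lemma piT_linear t : linear (piT t).
Proof. exact: linearP. Qed.

Lemma piT1 v : piT (Qpx_one p, Qpx_one p) v = v.
Proof. exact: pi_rep.1. Qed.

Lemma pi_true t v : pi (t, true) v = - piT t v.
Proof.
have <- : Tt_mul (t, false) (Tt_mone p) = (t, true).
  by rewrite /Tt_mul /= T_mul1 sigmaT1.
by rewrite pi_rep.2 pi_gen linearN.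
Qed.

Lemma pi_sign g v : pi g v = piT g.1 v \/ pi g v = - piT g.1 v.
Proof. by case: g => t [|]; [right; rewrite pi_true | left]. Qed.

Lemma piT_mul s t v :
  piT (T_mul s t) v = piT s (piT t v) \/ piT (T_mul s t) v = - piT s (piT t v).
Proof.
rewrite /piT -pi_rep.2.
by case: (pi_sign (Tt_mul (s, false) (t, false)) v) => ->; [left | right; rewrite opprK].
Qed.

Lemma piT_zdiagD a b c d v :
  piT (zdiag p (a + c) (b + d)) v = piT (zdiag p a b) (piT (zdiag p c d) v).
Proof. by rewrite /piT -pi_rep.2 /Tt_mul /= zdiagD sigma_zdiag. Qed.

Lemma piT_zdiagK a b : cancel (piT (zdiag p (- a) (- b))) (piT (zdiag p a b)).
Proof. by move=> v; rewrite -piT_zdiagD !subrr zdiag00 piT1. Qed.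

Lemma piT_zdiag_comm a b g v : piT (zdiag p a b) (pi g v) = pi g (piT (zdiag p a b) v).
Proof. by rewrite /piT -!pi_rep.2 zdiag_central. Qed.

Lemma irreducible_schur (P : V -> V) : irreducible pi -> linear P ->
  (forall g v, P (pi g v) = pi g (P v)) -> (forall v, P v = 0) \/ invertible P.
Proof.
move=> [_ pi_irr] P_lin P_pi.
have ker_inv : invariant_subspace pi (fun v => P v = 0).
  split=> [|u w Pu Pw|c u Pu|g u Pu]; first exact: lin0.
  - by rewrite linD // Pu Pw addr0.
  - by rewrite linZ // Pu scaler0.
  - by rewrite P_pi Pu linear0.
have im_inv : invariant_subspace pi (fun v => exists u, v = P u).
  split=> [|? ? [u ->] [w ->]|c ? [u ->]|g ? [u ->]].
  - by exists 0; rewrite lin0.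
  - by exists (u + w); rewrite linD.
  - by exists (c *: u); rewrite linZ.
  - by exists (pi g u); rewrite P_pi.
have [ker_all | ker0] := pi_irr _ ker_inv; first by left.
have [im_all | im0] := pi_irr _ im_inv; last by left=> v; apply: im0; exists v.
by right; split=> // u; have [w ->] := im_all u; exists w.
Qed.

End TorusRepresentation.

Section TorusDecomposition.
Variable p : nat.

(* Non-units are sent to 1 only to make [Zpx_of_nat] total. *)
Definition unit_part (x : nat) := if coprime x p then x else 1%N.

Lemma unit_part_norm x n : (unit_part x %% p ^ n.+1 %% p ^ n.+1 = unit_part x %% p ^ n.+1)%N.
Proof. exact: modn_mod. Qed.

Lemma unit_part_compat x n : (unit_part x %% p ^ n.+2 %% p ^ n.+1 = unit_part x %% p ^ n.+1)%N.
Proof. by rewrite modn_dvdm // dvdn_exp2l. Qed.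

Lemma unit_part_unit x : coprime (unit_part x %% p ^ 1)%N p.
Proof. by rewrite expn1 coprime_modl /unit_part; case: ifP => // _; apply: coprime1n. Qed.

Definition Zpx_of_nat (x : nat) : Zpx p :=
  MkZpx (unit_part_norm x) (unit_part_compat x) (unit_part_unit x).

Lemma zf_Zpx_of_nat x n : coprime x p -> zf (Zpx_of_nat x) n = (x %% p ^ n.+1)%N.
Proof. by rewrite /= /unit_part => ->. Qed.

Lemma Zpx_of_natM x y : coprime x p -> coprime y p ->
  Zpx_of_nat (x * y) = Zpx_mul (Zpx_of_nat x) (Zpx_of_nat y).
Proof.
move=> x_cop y_cop; apply: Zpx_ext => n.
rewrite zf_Zpx_of_nat ?coprimeMl ?x_cop ?y_cop //=.
by rewrite /unit_part x_cop y_cop modnMm.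
Qed.

Lemma mod_inverse m x : prime p -> coprime x p ->
  exists2 r, coprime r p & (x * r = 1 %[mod p ^ m.+1])%N.
Proof.
move=> p_pr x_cop; exists (x ^ (totient (p ^ m.+1)).-1)%N; first exact: coprimeXl.
rewrite -expnS prednK ?totient_gt0 ?expn_gt0 ?prime_gt0 //.
by apply: Euler_exp_totient; apply: coprimeXr.
Qed.

Lemma modz2_mem (a : int) : (a %% 2)%Z \in [:: 0; 1].
Proof.
have := modz_ge0 a (d := 2) isT; have := ltz_pmod a (d := 2) isT.
by case: (a %% 2)%Z => // [[|[|n]]].
Qed.

(* Zpx p has no inverse at hand, so x is first multiplied by some c in K_m. *)
Lemma Qpx_decomp m (x : Qpx p) : prime p ->
  exists (c y : Qpx p) (a : int) (i : int * nat),
  [/\ in_K m c, in_K m y, i.1 \in [:: 0; 1], (i.2 < p ^ m.+1)%N &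
      Qpx_mul x c = Qpx_mul (Qpx_mul (a * 2, Zpx_one p) (i.1, Zpx_of_nat i.2)) y].
Proof.
move=> p_pr; case: x => e u; set s := zf u m.
have s_cop : coprime s p := zf_coprime u m.
have [r r_cop sr1] := mod_inverse m p_pr s_cop.
exists (0, Zpx_of_nat (s * r)), (0, Zpx_mul u (Zpx_of_nat r)), (e %/ 2)%Z, ((e %% 2)%Z, s).
split.
- by rewrite /in_K zf_Zpx_of_nat ?coprimeMl ?s_cop // sr1 !eqxx.
- by rewrite /in_K /= /unit_part r_cop modnMmr sr1 !eqxx.
- exact: modz2_mem.
- by rewrite /= /s -(zf_norm u m) ltn_pmod // expn_gt0 prime_gt0.
rewrite /Qpx_mul /= -divz_eq Zpx_mul1l Zpx_of_natM // !Zpx_mulA.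
by rewrite [Zpx_mul u _]Zpx_mulC.
Qed.

End TorusDecomposition.

Section SmoothVector.
Variables (p : nat) (k : fieldType) (V : lmodType k) (pi : Ttilde p -> {linear V -> V}).
Hypotheses (p_pr : prime p) (p_odd : odd p) (pi_rep : is_rep pi) (pi_gen : genuine pi).

Definition central_span (I : eqType) (w : I -> V) (s : seq I) :=
  laurent_span (piT pi (zdiag p 1 0)) (piT pi (zdiag p (-1) 0))
               (piT pi (zdiag p 0 1)) (piT pi (zdiag p 0 (-1))) w s.

Variables (v0 : V) (m : nat).
Hypothesis v0_fixed : forall t : T p, in_K m t.1 -> in_K m t.2 -> pi (t, false) v0 = v0.

(* Parities of the valuations and residues mod p^(m+1) of the unit parts:
   up to K_m on both sides, every t is zdiag a b * coset_rep i (see Qpx_decomp). *)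
Definition coset_reps : seq ((int * int) * (nat * nat)) :=
  [seq (e, x) | e <- [seq (a, b) | a <- [:: 0; 1], b <- [:: 0; 1]],
                x <- [seq (x, y) | x <- iota 0 (p ^ m.+1), y <- iota 0 (p ^ m.+1)]].

Definition coset_rep (i : (int * int) * (nat * nat)) : T p :=
  ((i.1.1, Zpx_of_nat p i.2.1), (i.1.2, Zpx_of_nat p i.2.2)).

Let span := central_span (fun i => piT pi (coset_rep i) v0) coset_reps.

Lemma spanN u : span u -> span (- u).
Proof. by rewrite -scaleN1r; apply: laurent_spanZ. Qed.

Lemma span_sign u v : span u -> v = u \/ v = - u -> span v.
Proof. by move=> span_u [|] ->; last apply: spanN. Qed.

Lemma span_zdiag_pow (c d : int) (n : int) u :
  (forall u, span u -> span (piT pi (zdiag p c d) u)) ->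
  (forall u, span u -> span (piT pi (zdiag p (- c) (- d)) u)) ->
  span u -> span (piT pi (zdiag p (n * c) (n * d)) u).
Proof.
move=> span_up span_down; elim/int_ind: n u => [|n IHn|n IHn] u span_u.
- by rewrite !mul0r zdiag00 piT1.
- by rewrite intS !mulrDl !mul1r piT_zdiagD //; apply/span_up/IHn.
- by rewrite intS opprD !mulrDl !mulN1r piT_zdiagD //; apply/span_down/IHn.
Qed.

Lemma span_zdiag a b u : span u -> span (piT pi (zdiag p a b) u).
Proof.
move=> span_u; rewrite -[a]addr0 -[b]add0r piT_zdiagD //.
have := span_zdiag_pow (c := 1) (d := 0) a; rewrite mulr1 mulr0 oppr0.
apply; [exact: laurent_spanX | exact: laurent_spanXi |].
have := span_zdiag_pow (c := 0) (d := 1) b; rewrite mulr1 mulr0 oppr0.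
by apply; [exact: laurent_spanY | exact: laurent_spanYi |].
Qed.

Lemma span_piT_mul s t v : span (piT pi (T_mul s t) v) -> span (piT pi s (piT pi t v)).
Proof.
case: (piT_mul p_pr p_odd pi_rep pi_gen s t v) => -> // /spanN.
by rewrite opprK.
Qed.

Lemma span_piT_mulV s t v : span (piT pi s (piT pi t v)) -> span (piT pi (T_mul s t) v).
Proof. by case: (piT_mul p_pr p_odd pi_rep pi_gen s t v) => -> //; apply: spanN. Qed.

Lemma span_piT_v0 t : span (piT pi t v0).
Proof.
have [c1 [y1 [a1 [i1 [c1_K y1_K i1_e i1_x dec1]]]]] := Qpx_decomp m t.1 p_pr.
have [c2 [y2 [a2 [i2 [c2_K y2_K i2_e i2_x dec2]]]]] := Qpx_decomp m t.2 p_pr.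
pose i := ((i1.1, i2.1), (i1.2, i2.2)).
have i_rep : i \in coset_reps.
  by apply: allpairs_f; apply: allpairs_f; rewrite ?mem_iota.
have dec : T_mul t (c1, c2) = T_mul (T_mul (zdiag p a1 a2) (coset_rep i)) (y1, y2).
  by rewrite /T_mul dec1 dec2.
rewrite -(v0_fixed (t := (c1, c2))) //; apply: span_piT_mul; rewrite dec.
apply: span_piT_mulV; rewrite [piT pi _ v0]v0_fixed //; apply: span_piT_mulV.
by apply: span_zdiag; apply: (laurent_span_gen _ _ _ _ _ i_rep).
Qed.

Lemma span_pi_v0 g : span (pi g v0).
Proof. exact: span_sign (span_piT_v0 g.1) (pi_sign p_pr p_odd pi_rep pi_gen g v0). Qed.

Lemma span_pi g u : span u -> span (pi g u).
Proof.
elim=> {u} [i _ | | u v _ ? _ ? | c u _ ? | u _ ? | u _ ? | u _ ? | u _ ?].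
- by rewrite /piT -pi_rep.2; apply: span_pi_v0.
- by rewrite linear0; apply: laurent_span0.
- by rewrite linearD; apply: laurent_spanD.
- by rewrite linearZ; apply: laurent_spanZ.
- by rewrite -piT_zdiag_comm //; apply: laurent_spanX.
- by rewrite -piT_zdiag_comm //; apply: laurent_spanXi.
- by rewrite -piT_zdiag_comm //; apply: laurent_spanY.
- by rewrite -piT_zdiag_comm //; apply: laurent_spanYi.
Qed.

End SmoothVector.

Theorem lemma4p13 (p : nat) (k : closedFieldType) (V : lmodType k)
  (pi : Ttilde p -> {linear V -> V}) :
  prime p -> odd p -> p \in [pchar k] ->
  is_rep pi -> genuine pi -> smooth pi -> irreducible pi ->
  finite_dim V.
Proof.
move=> p_pr p_odd _ pi_rep pi_gen pi_smooth pi_irr.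
have [[v0 nz_v0] irr] := pi_irr; have [m v0_fixed] := pi_smooth v0.
pose w i := piT pi (coset_rep p i) v0.
have span_inv : invariant_subspace pi (central_span pi w (coset_reps p m)).
  split=> [|u u'|c u|g u]; [exact: laurent_span0 | exact: laurent_spanD |
                             exact: laurent_spanZ | exact: span_pi].
have [spanned | span0] := irr _ span_inv; last first.
  move: nz_v0; rewrite (span0 v0) ?eqxx // -[v0]pi_rep.1.
  exact: span_pi_v0.
have zdiagK a b := piT_zdiagK p_pr p_odd pi_rep a b.
have zdiag_comm a b := piT_zdiag_comm p_pr p_odd pi_rep a b.
apply: (laurent_span_finite_dim (act := pi) (fun g => linearP (pi g))
  (fun P => irreducible_schur pi_irr) (ex_intro _ v0 nz_v0) _ _ _ _
  (zdiagK 1 0) (zdiagK (-1) 0) (zdiagK 0 1) (zdiagK 0 (-1)) _ _ _ spanned).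
all: by [apply: piT_linear | move=> *; apply: zdiag_comm].
Qed.
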